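(* Every point $(s:t:u:v)\in\mathcal{D}_1^{(2)}$ has $t\neq0$, and the map $sym_{\mathcal{D}_1^{(2)}}:\mathcal{D}_1^{(2)}\to\mathcal{D}_1$, $(s:t:u:v)\mapsto\left(\frac{u}{t},\frac{v}{t}\right)$, is a proper holomorphic map satisfying $sym_{\mathcal{D}_1^{(2)}}\circ J=F\circ sym$ on $\mathbb{D}\times\mathbb{D}$, where $J(z,w)=(z-w:1-zw:i(1+zw):-i(z+w))$, $F(s,p)=\left(i\frac{1+p}{1-p},\,-i\frac{s}{1-p}\right)$ and $sym(z_1,z_2)=(z_1+z_2,z_1z_2)$.
   Context: $\mathbb{D}$ is the open unit disc in $\mathbb{C}$; $\mathbb{G}=\{(z_1+z_2,z_1z_2):z_1,z_2\in\mathbb{D}\}$; $\mathcal{D}_1=\{(z_1,z_2)\in\mathbb{C}^2: 1+|z_1|^2-|z_2|^2>|1+z_1^2-z_2^2|,\ \mathrm{Im}(z_1(1+\overline{z_2}))>0\}$; $F:\mathbb{G}\to\mathcal{D}_1$ and $J:\mathbb{D}\times\mathbb{D}\to\mathcal{D}_1^{(2)}$ are biholomorphisms. Points of $\mathbb{CP}^3$ are written $(s:t:u:v)$, and $\mathcal{D}_1^{(2)}=\{(1:t:u:v): |t|^2+|u|^2-|v|^2>1,\ t^2+u^2-v^2=1,\ \mathrm{Im}(u(\overline{t}+\overline{v}))>0\}\cup\{(0:t:u:v): t^2+u^2-v^2=0,\ \mathrm{Im}(u(\overline{t}+\overline{v}))>0\}$. *)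

From Stdlib Require Import Reals List.
From Coquelicot Require Import Coquelicot.
Open Scope R_scope.

(* C^2, C^3, C^4 as normed C-modules, right-nested:
   a point (s:t:u:v) of CP^3 is represented by a vector (s,(t,(u,v))) in C^4. *)
Definition C2 : NormedModule C_AbsRing :=
  prod_NormedModule C_AbsRing C_NormedModule C_NormedModule.
Definition C3 : NormedModule C_AbsRing :=
  prod_NormedModule C_AbsRing C_NormedModule C2.
Definition C4 : NormedModule C_AbsRing :=
  prod_NormedModule C_AbsRing C_NormedModule C3.

Definition mk4 (s t u v : C) : C4 := (s, (t, (u, v))).
Definition c_s (x : C4) : C := fst x.
Definition c_t (x : C4) : C := fst (snd x).
Definition c_u (x : C4) : C := fst (snd (snd x)).
Definition c_v (x : C4) : C := snd (snd (snd x)).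

Definition sc4 (l : C) (x : C4) : C4 :=
  mk4 (l * c_s x)%C (l * c_t x)%C (l * c_u x)%C (l * c_v x)%C.

Definition unit_disc (z : C) : Prop := Cmod z < 1.

Definition D1 (z : C2) : Prop :=
  let z1 := fst z in let z2 := snd z in
  Cmod (1 + z1 * z1 - z2 * z2)%C < 1 + Cmod z1 ^ 2 - Cmod z2 ^ 2 /\
  0 < Im (z1 * (1 + Cconj z2))%C.

(* D_1^(2) as a set of points of CP^3, given by its (saturated) set of
   nonzero representatives in C^4: x represents a point of D_1^(2) iff
   some nonzero multiple of x has one of the two normalized forms. *)
Definition D12_normal (y : C4) : Prop :=
  let s := c_s y in let t := c_t y in let u := c_u y in let v := c_v y in
  (s = 1%C /\ 1 < Cmod t ^ 2 + Cmod u ^ 2 - Cmod v ^ 2 /\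
     (t * t + u * u - v * v)%C = 1%C /\
     0 < Im (u * (Cconj t + Cconj v))%C)
  \/
  (s = 0%C /\ (t * t + u * u - v * v)%C = 0%C /\
     0 < Im (u * (Cconj t + Cconj v))%C).

Definition D12 (x : C4) : Prop :=
  x <> mk4 0 0 0 0 /\ exists l : C, l <> 0%C /\ D12_normal (sc4 l x).

Definition sym (z1 z2 : C) : C2 := ((z1 + z2)%C, (z1 * z2)%C).

Definition F (w : C2) : C2 :=
  let s := fst w in let p := snd w in
  ((Ci * ((1 + p) / (1 - p)))%C, (- Ci * (s / (1 - p)))%C).

Definition J (z w : C) : C4 :=
  mk4 (z - w)%C (1 - z * w)%C (Ci * (1 + z * w))%C (- Ci * (z + w))%C.

Definition symD (x : C4) : C2 := ((c_u x / c_t x)%C, (c_v x / c_t x)%C).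

(* A set of points of CP^3, given as a predicate on representatives, is open
   iff it is saturated and its set of nonzero representatives is open in C^4
   (quotient topology of C^4 \ {0} -> CP^3). *)
Definition proj_open (O : C4 -> Prop) : Prop :=
  (forall (l : C) (x : C4), l <> 0%C -> x <> mk4 0 0 0 0 -> O x -> O (sc4 l x)) /\
  open (fun x : C4 => x <> mk4 0 0 0 0 /\ O x).

Definition proj_compact (A : C4 -> Prop) : Prop :=
  forall (I : Type) (O : I -> C4 -> Prop),
    (forall i, proj_open (O i)) ->
    (forall x, A x -> exists i, O i x) ->
    exists l : list I, forall x, A x -> exists i, In i l /\ O i x.

Definition compact2 (K : C2 -> Prop) : Prop :=
  forall (I : Type) (O : I -> C2 -> Prop),
    (forall i, open (O i)) ->
    (forall x, K x -> exists i, O i x) ->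
    exists l : list I, forall x, K x -> exists i, In i l /\ O i x.

(* holomorphic on an open set of C^3: complex Frechet differentiable at
   every point (linearity is over C_AbsRing, i.e. C-linear) *)
Definition holo3 (U : C3 -> Prop) (g : C3 -> C2) : Prop :=
  forall y, U y -> ex_filterdiff g (locally y).

Definition coord (k : nat) (x : C4) : C :=
  match k with 0 => c_s x | 1 => c_t x | 2 => c_u x | _ => c_v x end.

Definition chart (k : nat) (x : C4) : C3 :=
  let s := c_s x in let t := c_t x in let u := c_u x in let v := c_v x in
  match k with
  | 0 => ((t / s)%C, ((u / s)%C, (v / s)%C))
  | 1 => ((s / t)%C, ((u / t)%C, (v / t)%C))
  | 2 => ((s / u)%C, ((t / u)%C, (v / u)%C))
  | _ => ((s / v)%C, ((t / v)%C, (u / v)%C))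
  end.

Definition holo_on_proj (S : C4 -> Prop) (f : C4 -> C2) : Prop :=
  forall p, S p ->
    exists k : nat, (k <= 3)%nat /\ coord k p <> 0%C /\
    exists (U : C3 -> Prop) (g : C3 -> C2),
      open U /\ U (chart k p) /\ holo3 U g /\
      forall q, S q -> coord k q <> 0%C -> U (chart k q) -> f q = g (chart k q).

Definition proper_proj (S : C4 -> Prop) (T : C2 -> Prop) (f : C4 -> C2) : Prop :=
  forall K : C2 -> Prop, (forall z, K z -> T z) -> compact2 K ->
    proj_compact (fun x => S x /\ K (f x)).

From Stdlib Require Import Reals List Lra Psatz.
From Coquelicot Require Import Coquelicot.

(* The representatives (s,t,u,v) of points of D_1^(2) are exactly the vectors
   with s^2 = t^2 + u^2 - v^2, |s|^2 < |t|^2 + |u|^2 - |v|^2 and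
   Im (u (conj t + conj v)) > 0.  These conditions are invariant under scaling
   and force t <> 0; normalised by t = 1 they say that z = (u,v) lies in D_1
   and that s is a square root of 1 + u^2 - v^2.  So sym_{D_1^(2)} is the
   projection (s,z) |-> z of a two-sheeted branched cover of D_1; it is proper
   because the pair of roots +-s moves continuously with z, and in the chart
   t = 1 it is a linear projection, hence holomorphic. *)

Ltac Cexpand := cbv [Re Im Cmult Cplus Cminus Copp Cconj RtoC fst snd].

Lemma Cmod_sqr_sub_sqr (a b : C) :
  Cmod (a * a - b * b)%C ^ 2 = (Cmod a ^ 2 - Cmod b ^ 2) ^ 2 + 4 * Im (a * Cconj b)%C ^ 2.
Proof. rewrite !Cmod2_alt. destruct a as [a1 a2], b as [b1 b2]. Cexpand. ring. Qed.

Lemma Cmod_sqr_add_sqr (a b : C) :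
  Cmod (a * a + b * b)%C ^ 2 = (Cmod a ^ 2 + Cmod b ^ 2) ^ 2 - 4 * Im (a * Cconj b)%C ^ 2.
Proof. rewrite !Cmod2_alt. destruct a as [a1 a2], b as [b1 b2]. Cexpand. ring. Qed.

Lemma Im_mul_conj_swap (a b : C) : Im (b * Cconj a)%C = - Im (a * Cconj b)%C.
Proof. destruct a as [a1 a2], b as [b1 b2]. Cexpand. ring. Qed.

(* |v|^4 = (|t|^2 + |u|^2)^2 - 4 Im(u conj t)^2 and
   |t|^4 = (|v|^2 - |u|^2)^2 + 4 Im(u conj v)^2, so |v|^2 >= |t|^2 + |u|^2
   would force both imaginary parts to vanish. *)
Lemma null_cone_interior (t u v : C) :
  (v * v = t * t + u * u)%C -> 0 < Im (u * (Cconj t + Cconj v))%C ->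
  Cmod v ^ 2 < Cmod t ^ 2 + Cmod u ^ 2.
Proof.
  intros Hv Him.
  rewrite Cmult_plus_distr_l, im_plus in Him.
  assert (HV : (Cmod v ^ 2) ^ 2
               = (Cmod t ^ 2 + Cmod u ^ 2) ^ 2 - 4 * Im (u * Cconj t)%C ^ 2).
  { replace ((Cmod v ^ 2) ^ 2) with (Cmod (v * v)%C ^ 2) by (rewrite Cmod_mult; ring).
    rewrite Hv, Cmod_sqr_add_sqr, (Im_mul_conj_swap t u). ring. }
  assert (HT : (Cmod t ^ 2) ^ 2
               = (Cmod v ^ 2 - Cmod u ^ 2) ^ 2 + 4 * Im (u * Cconj v)%C ^ 2).
  { replace ((Cmod t ^ 2) ^ 2) with (Cmod (v * v - u * u)%C ^ 2)
      by (replace (v * v - u * u)%C with (t * t)%C by (rewrite Hv; ring);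
          rewrite Cmod_mult; ring).
    rewrite Cmod_sqr_sub_sqr, (Im_mul_conj_swap u v). ring. }
  set (A := Im (u * Cconj t)%C) in *; set (B := Im (u * Cconj v)%C) in *.
  set (T := Cmod t ^ 2) in *; set (U := Cmod u ^ 2) in *; set (V := Cmod v ^ 2) in *.
  assert (0 <= T /\ 0 <= U /\ 0 <= V) as (? & ? & ?) by (repeat split; apply pow2_ge_0).
  apply Rnot_le_lt; intros Hle.
  assert (HA : A = 0) by nra.
  assert (HVeq : V = T + U) by nra.
  assert (HB : B = 0) by (rewrite HVeq in HT; nra).
  lra.
Qed.

Lemma Cconj_RtoC (r : R) : Cconj (RtoC r) = RtoC r.
Proof. apply injective_projections; Cexpand; ring. Qed.

Definition D12_cone (x : C4) : Prop :=
  (c_s x * c_s x = c_t x * c_t x + c_u x * c_u x - c_v x * c_v x)%C /\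
  Cmod (c_s x) ^ 2 < Cmod (c_t x) ^ 2 + Cmod (c_u x) ^ 2 - Cmod (c_v x) ^ 2 /\
  0 < Im (c_u x * (Cconj (c_t x) + Cconj (c_v x)))%C.

(* For t = 0: |s|^4 = |u^2 - v^2|^2 = (|u|^2 - |v|^2)^2 + 4 Im(u conj v)^2 > |s|^4. *)
Lemma D12_cone_t_neq0 (x : C4) : D12_cone x -> c_t x <> 0%C.
Proof.
  destruct x as [s [t [u v]]]; unfold D12_cone, c_s, c_t, c_u, c_v; cbn [fst snd].
  intros [Hq [Hn Him]] ->.
  rewrite Cmod_0 in Hn.
  replace (u * (Cconj 0 + Cconj v))%C with (u * Cconj v)%C in Him
    by (rewrite Cconj_RtoC; ring).
  assert (Hs : (Cmod s ^ 2) ^ 2 = (Cmod u ^ 2 - Cmod v ^ 2) ^ 2 + 4 * Im (u * Cconj v)%C ^ 2).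
  { rewrite <- Cmod_sqr_sub_sqr.
    replace (u * u - v * v)%C with (s * s)%C by (rewrite Hq; ring).
    rewrite Cmod_mult; ring. }
  pose proof (pow2_ge_0 (Cmod s)). nra.
Qed.

Lemma D12_cone_scale (l : C) (x : C4) : l <> 0%C -> D12_cone x -> D12_cone (sc4 l x).
Proof.
  destruct x as [s [t [u v]]]; unfold D12_cone, sc4, mk4, c_s, c_t, c_u, c_v; cbn [fst snd].
  intros Hl [Hq [Hn Him]].
  assert (Hl2 : 0 < Cmod l ^ 2) by (apply pow_lt, Cmod_gt_0, Hl).
  split; [|split].
  - transitivity (l * l * (s * s))%C; [ring|]. rewrite Hq. ring.
  - rewrite !Cmod_mult.
    replace ((Cmod l * Cmod t) ^ 2 + (Cmod l * Cmod u) ^ 2 - (Cmod l * Cmod v) ^ 2)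
      with (Cmod l ^ 2 * (Cmod t ^ 2 + Cmod u ^ 2 - Cmod v ^ 2)) by ring.
    rewrite Rpow_mult_distr. apply Rmult_lt_compat_l; assumption.
  - replace (l * u * (Cconj (l * t) + Cconj (l * v)))%C
      with (u * (Cconj t + Cconj v) * RtoC (Cmod l ^ 2))%C
      by (rewrite Cmod2_conj, !Cmult_conj; ring).
    rewrite im_scal_r. apply Rmult_lt_0_compat; assumption.
Qed.

Lemma Cinv_neq0 (l : C) : l <> 0%C -> (/ l)%C <> 0%C.
Proof. intros Hl E. apply C1_nz. rewrite <- (Cinv_r l Hl), E. ring. Qed.

Lemma sc4_inv (l : C) (x : C4) : l <> 0%C -> sc4 (/ l) (sc4 l x) = x.
Proof.
  intros Hl. destruct x as [s [t [u v]]].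
  unfold sc4, mk4, c_s, c_t, c_u, c_v; cbn [fst snd].
  rewrite !Cmult_assoc, !(Cinv_l l Hl), !Cmult_1_l. reflexivity.
Qed.

Lemma D12_cone_unscale (l : C) (x : C4) : l <> 0%C -> D12_cone (sc4 l x) -> D12_cone x.
Proof.
  intros Hl Hx. rewrite <- (sc4_inv l x Hl).
  exact (D12_cone_scale _ _ (Cinv_neq0 l Hl) Hx).
Qed.

Lemma D12_normal_cone (y : C4) : D12_normal y -> D12_cone y.
Proof.
  unfold D12_normal, D12_cone.
  intros [[-> [Hn [Hq Him]]] | [-> [Hq Him]]]; (split; [rewrite Hq; ring|split; [|exact Him]]).
  - rewrite Cmod_1. lra.
  - assert (Hv : (c_v y * c_v y = c_t y * c_t y + c_u y * c_u y)%C)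
      by (transitivity (c_t y * c_t y + c_u y * c_u y - 0)%C; [rewrite <- Hq|]; ring).
    pose proof (null_cone_interior _ _ _ Hv Him). rewrite Cmod_0. lra.
Qed.

Lemma D12_cone_normal (y : C4) : D12_cone y -> c_s y = 0%C \/ c_s y = 1%C -> D12_normal y.
Proof.
  unfold D12_normal, D12_cone. intros [Hq [Hn Him]] [Hs | Hs]; rewrite Hs in Hq, Hn.
  - right. split; [exact Hs|]. split; [rewrite <- Hq; ring|exact Him].
  - left. rewrite Cmod_1 in Hn. split; [exact Hs|]. split; [lra|].
    split; [rewrite <- Hq; ring|exact Him].
Qed.

Lemma D12_iff_cone (x : C4) : D12 x <-> D12_cone x.
Proof.
  split.
  - intros [_ [l [Hl Hx]]]. exact (D12_cone_unscale l x Hl (D12_normal_cone _ Hx)).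
  - intros Hx. split.
    + intros ->. destruct Hx as [_ [_ Him]]. revert Him.
      unfold c_t, c_u, c_v, mk4; cbn [fst snd]. rewrite Cmult_0_l. cbv; lra.
    + destruct (Ceq_dec (c_s x) 0) as [Hs | Hs].
      * exists 1%C. split; [exact C1_nz|].
        apply D12_cone_normal; [exact (D12_cone_scale 1 x C1_nz Hx)|].
        left. unfold sc4, c_s at 1, mk4; cbn [fst]. rewrite Hs. ring.
      * exists (/ c_s x)%C. split; [exact (Cinv_neq0 _ Hs)|].
        apply D12_cone_normal; [exact (D12_cone_scale _ x (Cinv_neq0 _ Hs) Hx)|].
        right. unfold sc4, c_s at 1, mk4; cbn [fst]. field. exact Hs.
Qed.

Definition rep1 (s : C) (z : C2) : C4 := mk4 s 1 (fst z) (snd z).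

Definition D1_quad (z : C2) : C := (1 + fst z * fst z - snd z * snd z)%C.

Lemma D12_cone_rep1 (s : C) (z : C2) :
  D12_cone (rep1 s z) <-> D1 z /\ (s * s = D1_quad z)%C.
Proof.
  destruct z as [z1 z2].
  unfold D12_cone, D1, D1_quad, rep1, mk4, c_s, c_t, c_u, c_v; cbn [fst snd].
  rewrite Cmod_1, Cconj_RtoC, pow1.
  replace (1 * 1 + z1 * z1 - z2 * z2)%C with (1 + z1 * z1 - z2 * z2)%C by ring.
  split.
  - intros [Hq [Hn Him]]. rewrite <- Hq, Cmod_mult. split; [split; [nra|exact Him]|reflexivity].
  - intros [[Hn Him] Hq]. rewrite Hq. split; [reflexivity|split; [|exact Him]].
    rewrite <- Hq, Cmod_mult in Hn. nra.
Qed.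

Lemma symD_rep1 (s : C) (z : C2) : symD (rep1 s z) = z.
Proof.
  destruct z as [z1 z2]. unfold symD, rep1, mk4, c_t, c_u, c_v; cbn [fst snd].
  assert (Hinv1 : (/ 1 = 1)%C) by (transitivity (1 * / 1)%C; [ring|exact (Cinv_r 1 C1_nz)]).
  unfold Cdiv. rewrite Hinv1, !Cmult_1_r. reflexivity.
Qed.

Lemma rep1_symD (x : C4) :
  c_t x <> 0%C -> x = sc4 (c_t x) (rep1 (c_s x / c_t x) (symD x)).
Proof.
  intros Ht. destruct x as [s [t [u v]]].
  unfold sc4, rep1, symD, mk4, c_s, c_t, c_u, c_v in *; cbn [fst snd] in *.
  unfold Cdiv. rewrite !(Cmult_comm t), <- !Cmult_assoc, !(Cinv_l t Ht), !Cmult_1_r, Cmult_1_l.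
  reflexivity.
Qed.

Lemma D12_cone_symD (x : C4) :
  D12_cone x -> D1 (symD x) /\ (c_s x / c_t x * (c_s x / c_t x) = D1_quad (symD x))%C.
Proof.
  intros Hx. pose proof (D12_cone_t_neq0 x Hx) as Ht.
  apply D12_cone_rep1, (D12_cone_unscale (c_t x) _ Ht).
  rewrite <- (rep1_symD x Ht). exact Hx.
Qed.

Lemma holo_on_proj_symD : holo_on_proj D12 symD.
Proof.
  intros p Hp. exists 1%nat. split; [repeat constructor|].
  split; [exact (D12_cone_t_neq0 p (proj1 (D12_iff_cone p) Hp))|].
  exists (fun _ => True), snd.
  split; [apply open_true|]. split; [exact I|]. split.
  - intros y _. exists snd. apply filterdiff_linear, is_linear_snd.
  - intros q _ _ _. reflexivity.
Qed.

Lemma unit_disc_mult_neq1 (z w : C) : unit_disc z -> unit_disc w -> (z * w)%C <> 1%C.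
Proof.
  unfold unit_disc. intros Hz Hw E.
  pose proof (f_equal Cmod E) as Hmod. rewrite Cmod_mult, Cmod_1 in Hmod.
  pose proof (Cmod_ge_0 z). pose proof (Cmod_ge_0 w). nra.
Qed.

Lemma symD_J (z w : C) : (z * w)%C <> 1%C -> symD (J z w) = F (sym z w).
Proof.
  intros Hzw. assert (H : (1 - z * w)%C <> 0%C).
  { intros E. apply Hzw. transitivity (1 - (1 - z * w))%C; [ring|]. rewrite E. ring. }
  unfold symD, J, F, sym, mk4, c_u, c_v, c_t; cbn [fst snd].
  f_equal; field; exact H.
Qed.

Lemma Csqrt_exists (w : C) : exists s : C, (s * s = w)%C.
Proof.
  destruct w as [a b].
  set (m := sqrt (a ^ 2 + b ^ 2)).
  assert (Hm2 : m * m = a ^ 2 + b ^ 2) by (apply sqrt_sqrt; nra).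
  assert (Hma : Rabs a <= m).
  { apply Rsqr_incr_0_var; [unfold Rsqr; rewrite Hm2, <- Rabs_mult, Rabs_right; nra|apply sqrt_pos]. }
  apply Rabs_le_between in Hma.
  set (x := sqrt ((m + a) / 2)); set (y := sqrt ((m - a) / 2)).
  assert (Hx : x * x = (m + a) / 2) by (apply sqrt_sqrt; lra).
  assert (Hy : y * y = (m - a) / 2) by (apply sqrt_sqrt; lra).
  assert (Hxy : x * y = Rabs b / 2).
  { unfold x, y. rewrite <- sqrt_mult_alt by lra.
    replace ((m + a) / 2 * ((m - a) / 2)) with (Rabs b / 2 * (Rabs b / 2))
      by (pose proof (Rsqr_abs b); unfold Rsqr in *; nra).
    apply sqrt_square. pose proof (Rabs_pos b). lra. }
  destruct (Rle_dec 0 b) as [hb | hb].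
  - exists (x, y). rewrite Rabs_right in Hxy by lra.
    apply injective_projections; Cexpand; lra.
  - exists (x, - y). rewrite Rabs_left in Hxy by lra.
    apply injective_projections; Cexpand; lra.
Qed.

Lemma Csqr_eq (s r : C) : (s * s = r * r)%C -> s = r \/ s = (- r)%C.
Proof.
  intros H.
  assert (E : ((s - r) * (s + r) = 0)%C).
  { transitivity (s * s - r * r)%C; [ring|]. rewrite H. ring. }
  pose proof (f_equal Cmod E) as E2. rewrite Cmod_mult, Cmod_0 in E2.
  destruct (Rmult_integral _ _ E2) as [h | h]; apply Cmod_eq_0 in h; [left|right].
  - transitivity (r + (s - r))%C; [ring|]. rewrite h. ring.
  - transitivity (- r + (s + r))%C; [ring|]. rewrite h. ring.
Qed.

Lemma Csqr_near (s r : C) (e : R) :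
  0 < e -> Cmod (s * s - r * r) < e ^ 2 -> Cmod (s - r) < e \/ Cmod (s + r) < e.
Proof.
  intros He H.
  replace (s * s - r * r)%C with ((s - r) * (s + r))%C in H by ring.
  rewrite Cmod_mult in H.
  pose proof (Cmod_ge_0 (s - r)). pose proof (Cmod_ge_0 (s + r)).
  destruct (Rlt_or_le (Cmod (s - r)) e); [left; assumption|right; nra].
Qed.

Lemma Cmod_lt_ball (x y : C) (e : R) : Cmod (y - x) < e -> ball x e y.
Proof. apply C_NormedModule_mixin_compat1. Qed.

(* Balls of C are coordinate squares, whence the factor sqrt 2 < 2. *)
Lemma ball_Cmod_lt (x y : C) (e : posreal) : ball x e y -> Cmod (y - x) < 2 * e.
Proof.
  intros H. apply C_NormedModule_mixin_compat2 in H.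
  change (Cmod (y - x) < sqrt 2 * e) in H.
  assert (Hsqrt2 : sqrt 2 < 2) by (rewrite <- (sqrt_square 2) at 2 by lra; apply sqrt_lt_1; lra).
  pose proof (cond_pos e). nra.
Qed.

Lemma D1_quad_near (z0 : C2) (e : R) :
  0 < e -> locally z0 (fun z => Cmod (D1_quad z - D1_quad z0) < e).
Proof.
  intros He. destruct z0 as [a b].
  pose proof (Cmod_ge_0 a) as Ha; pose proof (Cmod_ge_0 b) as Hb.
  set (M := 1 + Cmod a + Cmod b).
  assert (Hd : 0 < Rmin (1 / 2) (e / (4 * M))).
  { apply Rmin_pos; [lra|]. apply Rdiv_lt_0_compat; unfold M; lra. }
  assert (HdM : Rmin (1 / 2) (e / (4 * M)) * (4 * M) <= e).
  { pose proof (Rmin_r (1 / 2) (e / (4 * M))) as Hr.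
    apply (Rmult_le_compat_r (4 * M)) in Hr; [|unfold M; lra].
    unfold Rdiv in Hr. rewrite Rmult_assoc, Rinv_l in Hr by (unfold M; lra). lra. }
  pose proof (Rmin_l (1 / 2) (e / (4 * M))) as Hd1.
  exists (mkposreal _ Hd). intros [z1 z2] [H1 H2]; cbn [fst snd] in H1, H2.
  apply ball_Cmod_lt in H1; apply ball_Cmod_lt in H2; cbn [pos] in H1, H2.
  set (d := Rmin (1 / 2) (e / (4 * M))) in *; clearbody d; unfold M in HdM.
  assert (Hbound : forall r c : C, Cmod r < 2 * d ->
            Cmod (r * (r + 2 * c)) < 2 * d * (1 + 2 * Cmod c)).
  { intros r c Hr. rewrite Cmod_mult.
    assert (Cmod (r + 2 * c) <= 1 + 2 * Cmod c).
    { eapply Rle_trans; [apply Cmod_triangle|].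
      rewrite Cmod_mult, Cmod_R, Rabs_right by lra. lra. }
    pose proof (Cmod_ge_0 r); pose proof (Cmod_ge_0 c). nra. }
  unfold D1_quad; cbn [fst snd].
  replace (1 + z1 * z1 - z2 * z2 - (1 + a * a - b * b))%C
    with ((z1 - a) * ((z1 - a) + 2 * a) - (z2 - b) * ((z2 - b) + 2 * b))%C by ring.
  eapply Rle_lt_trans; [apply Cmod_triangle|]. rewrite Cmod_opp.
  pose proof (Hbound _ a H1); pose proof (Hbound _ b H2). lra.
Qed.

Lemma ball_rep1 (s0 s : C) (z0 z : C2) (e : posreal) :
  ball s0 e s -> ball z0 e z -> ball (rep1 s0 z0) e (rep1 s z).
Proof.
  intros Hs [H1 H2]. unfold rep1, mk4.
  split; [exact Hs|]. split; [apply ball_center|]. split; assumption.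
Qed.

Lemma open_rep1_roots (N : C4 -> Prop) :
  open N -> open (fun z : C2 => forall s : C, (s * s = D1_quad z)%C -> N (rep1 s z)).
Proof.
  intros HN z0 Hz0.
  destruct (Csqrt_exists (D1_quad z0)) as [s0 Hs0].
  assert (Hs0' : (- s0 * - s0 = D1_quad z0)%C) by (rewrite <- Hs0; ring).
  destruct (HN _ (Hz0 s0 Hs0)) as [e1 He1].
  destruct (HN _ (Hz0 _ Hs0')) as [e2 He2].
  assert (He : 0 < Rmin e1 e2) by (apply Rmin_pos; apply cond_pos).
  set (e := mkposreal _ He).
  apply (filter_imp (fun z => ball z0 e z /\ Cmod (D1_quad z - D1_quad z0) < e ^ 2)).
  2: { apply filter_and; [apply locally_ball|apply D1_quad_near, pow_lt, He]. }
  intros z [Hz Hq] s Hs.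
  destruct (Csqr_near s s0 e He) as [Hc | Hc]; [rewrite Hs, Hs0; exact Hq| |].
  - apply He1, (ball_le _ e), ball_rep1; [apply Rmin_l|apply Cmod_lt_ball, Hc|exact Hz].
  - apply He2, (ball_le _ e), ball_rep1; [apply Rmin_r| |exact Hz].
    apply Cmod_lt_ball. replace (s - - s0)%C with (s + s0)%C by ring. exact Hc.
Qed.

Lemma open_list_union {T : UniformSpace} {I : Type} (U : I -> T -> Prop) (L : list I) :
  (forall i, open (U i)) -> open (fun x => exists i, In i L /\ U i x).
Proof.
  intros HU. induction L as [|j L IH].
  - apply (open_ext (fun _ => False)); [|apply open_false].
    intros x. split; [tauto|]. intros [i [[] _]].
  - apply (open_ext (fun x => U j x \/ exists i, In i L /\ U i x)).
    + intros x. split.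
      * intros [Hj | [i [Hi Hx]]]; [exists j | exists i]; simpl; auto.
      * intros [i [[<- | Hi] Hx]]; [left | right; exists i]; auto.
    + apply open_or; [apply HU|exact IH].
Qed.

Lemma rep1_neq0 (s : C) (z : C2) : rep1 s z <> mk4 0 0 0 0.
Proof. intros E. apply C1_nz. exact (f_equal c_t E). Qed.

Lemma proper_symD : proper_proj D12 D1 symD.
Proof.
  intros K HK HKc I O HO Hcov.
  set (Ox := fun i x => x <> mk4 0 0 0 0 /\ O i x).
  set (W := fun (L : list I) (z : C2) =>
    forall s : C, (s * s = D1_quad z)%C -> exists i, In i L /\ Ox i (rep1 s z)).
  destruct (HKc (list I) W) as [LL HLL].
  - intros L. apply (open_rep1_roots (fun x => exists i, In i L /\ Ox i x)).
    apply open_list_union. intros i. exact (proj2 (HO i)).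
  - intros z Hz.
    assert (Hroots : forall s : C, (s * s = D1_quad z)%C -> exists i, Ox i (rep1 s z)).
    { intros s Hs. destruct (Hcov (rep1 s z)) as [i Hi]; [|exists i; split; [apply rep1_neq0|exact Hi]].
      rewrite D12_iff_cone, D12_cone_rep1, symD_rep1. auto. }
    destruct (Csqrt_exists (D1_quad z)) as [s0 Hs0].
    destruct (Hroots s0 Hs0) as [i0 Hi0].
    destruct (Hroots (- s0)%C) as [i1 Hi1]; [rewrite <- Hs0; ring|].
    exists (i0 :: i1 :: nil). intros s Hs.
    rewrite <- Hs0 in Hs. destruct (Csqr_eq s s0 Hs) as [-> | ->].
    + exists i0. simpl. auto.
    + exists i1. simpl. auto.
  - exists (concat LL). intros x [Hx HKx].
    apply D12_iff_cone in Hx.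
    pose proof (D12_cone_t_neq0 x Hx) as Ht.
    destruct (HLL _ HKx) as [L [HL HW]].
    destruct (HW _ (proj2 (D12_cone_symD x Hx))) as [i [Hi [_ HOi]]].
    exists i. split; [apply in_concat; exists L; auto|].
    rewrite (rep1_symD x Ht). apply (proj1 (HO i)); [exact Ht|apply rep1_neq0|exact HOi].
Qed.

Theorem theorem4p9 :
  (forall x : C4, D12 x -> c_t x <> 0%C) /\
  (forall x : C4, D12 x -> D1 (symD x)) /\
  holo_on_proj D12 symD /\
  proper_proj D12 D1 symD /\
  (forall z w : C, unit_disc z -> unit_disc w -> symD (J z w) = F (sym z w)).
Proof.
  split; [intros x Hx; apply D12_cone_t_neq0, D12_iff_cone, Hx|].
  split; [intros x Hx; apply D12_cone_symD, D12_iff_cone, Hx|].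
  split; [exact holo_on_proj_symD|].
  split; [exact proper_symD|].
  intros z w Hz Hw. apply symD_J, unit_disc_mult_neq1; assumption.
Qed.
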